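(* For every integer $k>9$, every subcubic graph $G$ with $\operatorname{tww}(G)\geq k$ that has minimal order among all subcubic graphs with twin-width at least $k$ has girth at least $5$.
   Context: All graphs are finite and simple. A graph is subcubic if its maximum degree is at most $3$. The girth is the length of a shortest cycle. A trigraph is a graph whose edges are each colored red or black; a graph is viewed as a trigraph with all edges black; the red degree of a vertex is the number of red edges incident to it. For a partition $\mathcal{P}$ of $V(G)$, the quotient trigraph $G/\mathcal{P}$ has vertex set $\mathcal{P}$; two distinct parts $U,W$ are joined by a black edge if every pair $\{u,w\}$ with $u\in U,w\in W$ is a black edge of $G$, are non-adjacent if no such pair is an edge, and are joined by a red edge otherwise. A contraction sequence of an $n$-vertex trigraph $G$ is a sequence $\mathcal{P}_n,\dots,\mathcal{P}_1$ of partitions of $V(G)$ where $\mathcal{P}_n$ is the partition into singletons and each $\mathcal{P}_i$ arises from $\mathcal{P}_{i+1}$ by merging two parts; its width is the maximum red degree over all $G/\mathcal{P}_i$, and $\operatorname{tww}(G)$ is the minimum width of a contraction sequence. *)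

From mathcomp Require Import all_boot.
Set Implicit Arguments. Unset Strict Implicit. Unset Printing Implicit Defensive.

(* A finite simple graph: vertex set a finType T, adjacency e : rel T that is
   symmetric and irreflexive. All edges are black (a graph viewed as a trigraph). *)
Section Graphs.
Variable T : finType.
Variable e : rel T.

Definition simple_graph : Prop := symmetric e /\ irreflexive e.

Definition degree (v : T) : nat := #|[set w | e v w]|.

Definition subcubic : Prop := forall v, degree v <= 3.

Definition is_graph_cycle (c : seq T) : bool :=
  [&& uniq c, 3 <= size c & path.cycle e c].

(* girth(G) >= g : every cycle has length at least g (acyclic graphs have
   infinite girth). *)
Definition girth_ge (g : nat) : Prop :=
  forall c : seq T, is_graph_cycle c -> g <= size c.

(* Quotient trigraph G/P: parts U, W distinct are joined by a red edge iff
   some pair (u,w) is an edge but not every pair is an edge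
   (all edges of G being black). *)
Definition red_edge (U W : {set T}) : bool :=
  [exists u in U, exists w in W, e u w] &&
  ~~ [forall u in U, forall w in W, e u w].

Definition red_degree (P : {set {set T}}) (U : {set T}) : nat :=
  #|[set W in P | (W != U) && red_edge U W]|.

Definition max_red_degree (P : {set {set T}}) : nat :=
  \max_(U in P) red_degree P U.

Definition singleton_partition : {set {set T}} := [set [set x] | x : T].

Definition merge_step (P Q : {set {set T}}) : Prop :=
  exists U W, [/\ U \in P, W \in P, U != W &
                  Q = (U :|: W) |: ((P :\ U) :\ W)].

(* A contraction sequence P_n, ..., P_1 (as a list starting at P_n). For n = 0
   the sequence consists of the (empty) singleton partition only. *)
Fixpoint merge_chain (P : {set {set T}}) (s : seq {set {set T}}) : Prop :=
  match s with
  | [::] => True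
  | Q :: s' => merge_step P Q /\ merge_chain Q s'
  end.

Definition contraction_sequence (s : seq {set {set T}}) : Prop :=
  match s with
  | [::] => False
  | P :: s' => [/\ P = singleton_partition, merge_chain P s' &
                   #|last P s'| <= 1]
  end.

Definition cs_width (s : seq {set {set T}}) : nat :=
  \max_(P <- s) max_red_degree P.

(* tww(G) >= k : every contraction sequence has width at least k
   (tww is the minimum width; contraction sequences always exist). *)
Definition tww_ge (k : nat) : Prop :=
  forall s, contraction_sequence s -> k <= cs_width s.

End Graphs.

From mathcomp Require Import all_boot zify.
Set Implicit Arguments. Unset Strict Implicit. Unset Printing Implicit Defensive.

(* Let c be a cycle x y z (w) of length 3 or 4, and let phi map z to x and w to y,
   fixing every other vertex.  The quotient G/phi is simple, subcubic and smaller
   than G: a merged vertex is adjacent to the other vertex of c/phi and to at most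
   one further neighbour of each of its two preimages.  A contraction sequence of
   G/phi of width t lifts to one of G of width at most max(t, 9): first build the
   fibres of phi one vertex at a time, then contract the preimages of the parts.
   A part with at most 3 vertices has red degree at most 9 in a subcubic graph, and
   a lifted part gaining a red edge that is black in G/phi is completely joined to
   another part, so has at most 3 vertices.  Since k > 9, tww(G/phi) >= k,
   contradicting the minimality of G. *)

Section MergeChains.
Variable T : finType.
Implicit Types (P Q : {set {set T}}) (s : seq {set {set T}}).

Lemma trivIset_singleton_partition : trivIset (singleton_partition T).
Proof.
apply/trivIsetP => _ _ /imsetP[x _ ->] /imsetP[y _ ->] neq_xy.
by rewrite disjoints1 in_set1; apply: contra neq_xy => /eqP->.
Qed.

Lemma merge_step_trivIset P Q : trivIset P -> merge_step P Q -> trivIset Q.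
Proof.
move=> /trivIsetP tiP [U [W [PU PW neqUW ->]]].
have tiUW C : C \in (P :\ U) :\ W -> [disjoint U :|: W & C].
  rewrite !in_setD1 => /and3P[neqCW neqCU PC].
  by rewrite -setI_eq0 setIUl setU_eq0 !setI_eq0 !tiP // eq_sym.
apply/trivIsetP => A B /setU1P[->|PA] /setU1P[->|PB]; rewrite ?eqxx //.
- by move=> _; apply: tiUW.
- by move=> _; rewrite disjoint_sym; apply: tiUW.
- by move: PA PB; rewrite !in_setD1 => /and3P[_ _ PA] /and3P[_ _ PB]; apply: tiP.
Qed.

Lemma merge_chain_trivIset P s :
  trivIset P -> merge_chain P s -> {in P :: s, forall Q, trivIset Q}.
Proof.
elim: s P => [|R s IH] P tiP /=; first by move=> _ Q; rewrite mem_seq1 => /eqP->.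
case=> stepPR chainR Q /predU1P[->//|]; exact/IH/chainR/(merge_step_trivIset tiP).
Qed.

Lemma merge_chain_rcons P s Q :
  merge_chain P s -> merge_step (last P s) Q -> merge_chain P (rcons s Q).
Proof. by elim: s P => [|R s IH] P //= [stepPR chainR] /(IH _ chainR). Qed.

Lemma merge_chain_cat P s1 s2 :
  merge_chain P s1 -> merge_chain (last P s1) s2 -> merge_chain P (s1 ++ s2).
Proof. by elim: s1 P => [|R s IH] P //= [stepPR chainR] /(IH _ chainR). Qed.

End MergeChains.

Section RedDegreeBound.
Variables (T : finType) (r : rel T) (d : nat).
Hypothesis deg_r : forall v, degree r v <= d.

Definition nbhd (A : {set T}) : {set T} := \bigcup_(a in A) [set w | r a w].

Lemma card_nbhd (A : {set T}) : #|nbhd A| <= d * #|A|.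
Proof.
rewrite mulnC -sum_nat_const.
apply: (big_ind2 (fun (X : {set T}) n => #|X| <= n)) => [|X1 n1 X2 n2 le1 le2|a _].
- by rewrite cards0.
- exact: leq_trans (leq_card_setU X1 X2) (leq_add le1 le2).
- exact: deg_r.
Qed.

Lemma card_blocks_meeting (P : {set {set T}}) (S : {set T}) :
  trivIset P -> #|[set B in P | ~~ [disjoint S & B]]| <= #|S|.
Proof.
move=> tiP; apply: leq_trans (leq_imset_card (pblock P) S).
apply/subset_leq_card/subsetP => B /[!inE] /andP[PB /pred0Pn[x /andP[Sx Bx]]].
by rewrite -(def_pblock tiP PB Bx) imset_f.
Qed.

Lemma nbhd_meets (A W : {set T}) :
  [exists a in A, exists w in W, r a w] -> ~~ [disjoint nbhd A & W].
Proof.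
case/exists_inP => a Aa /exists_inP[w Ww raw].
by apply/pred0Pn; exists w; rewrite /= Ww andbT; apply/bigcupP; exists a; rewrite ?inE.
Qed.

Lemma red_degree_le (P : {set {set T}}) (A : {set T}) :
  trivIset P -> red_degree r P A <= d * #|A|.
Proof.
move=> tiP; apply: leq_trans (card_nbhd A).
apply: leq_trans (card_blocks_meeting (nbhd A) tiP).
apply/subset_leq_card/subsetP => W /[!inE] /andP[-> /andP[_ /andP[adjAW _]]].
exact: nbhd_meets.
Qed.

End RedDegreeBound.

Section ChainToPartition.
Variable T : finType.
Implicit Types (P : {set {set T}}) (B D : {set T}).

Lemma card_partition_le P D : partition P D -> #|P| <= #|D|.
Proof.
move=> partP; rewrite (card_partition partP) -sum1_card.
by apply: leq_sum => B PB; rewrite card_gt0 (partition_neq0 partP PB).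
Qed.

Lemma partition_block1 P : partition P [set: T] -> {in P, forall B, #|B| <= 1} ->
  P = singleton_partition T.
Proof.
move=> partP small1.
have block1 B x : B \in P -> x \in B -> B = [set x].
  by move=> PB Bx; apply/setP => y; rewrite inE; apply: (card_le1P (small1 B PB)).
have coverP x : x \in cover P by rewrite (cover_partition partP) inE.
apply/setP => B; apply/idP/imsetP => [PB | [x _ ->]].
- have /set0Pn[x Bx] := partition_neq0 partP PB.
  by exists x; rewrite // (block1 B x).
- by rewrite -(block1 _ x (pblock_mem (coverP x))) ?mem_pblock ?pblock_mem.
Qed.

Lemma partition_split P D B x : partition P D -> B \in P -> x \in B -> B != [set x] ->
  let P' := [set x] |: ((B :\ x) |: (P :\ B)) in
  [/\ partition P' D, merge_step P' P & #|P'| = #|P|.+1].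
Proof.
move=> partP PB Bx neqBx P'.
have Bx_neq0 : B :\ x != set0.
  apply: contra neqBx => /eqP Bx0; rewrite eqEsubset sub1set Bx andbT.
  apply/subsetP => y By; rewrite inE; apply: contraT => neq_yx.
  by move/setP: Bx0 => /(_ y); rewrite !inE neq_yx By.
have notin_blocks (C : {set T}) : C \subset B -> C != set0 -> C != B -> C \notin P :\ B.
  move=> CB C_neq0 neqCB; rewrite in_setD1 negb_and neqCB /=.
  apply: contra C_neq0 => PC.
  move/trivIsetP: (partition_trivIset partP) => /(_ C B PC PB neqCB).
  by rewrite -setI_eq0 (setIidPl CB).
have neq_xBx : [set x] != B :\ x by apply/eqP => /setP/(_ x); rewrite !inE eqxx.
have x_notin : [set x] \notin (B :\ x) |: (P :\ B).
  by rewrite in_setU1 negb_or neq_xBx notin_blocks -?card_gt0 ?cards1 ?sub1set // eq_sym.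
have Bx_notin : B :\ x \notin P :\ B.
  by rewrite notin_blocks ?subD1set //; apply/eqP => /setP/(_ x); rewrite !inE eqxx Bx.
have cover_split : [set x] :|: ((B :\ x) :|: (D :\: B)) = D.
  rewrite setUA setD1K //; apply/setP => y; rewrite !inE.
  by case: (boolP (y \in B)) => //= /(subsetP (partitionS partP PB)).
split.
- have partB : partition ((B :\ x) |: (P :\ B)) ((B :\ x) :|: (D :\: B)).
    apply: partitionU1 (partitionD1 partP PB) Bx_neq0 _.
    by rewrite disjoints_subset; apply/subsetP => y /[!inE] /andP[_ ->].
  rewrite -cover_split; apply: partitionU1 partB _ _; first by rewrite -card_gt0 cards1.
  by rewrite disjoints1 !inE eqxx Bx.
- exists [set x], (B :\ x); split; [exact: setU11 | exact/setU1r/setU11 | done |].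
  by rewrite /P' !setU1K // setD1K // setD1K.
- by rewrite !cardsU1 x_notin Bx_notin (cardsD1 B P) PB.
Qed.

Lemma merge_chain_to_partition m P :
  partition P [set: T] -> {in P, forall B, #|B| <= m} ->
  exists2 s, merge_chain (singleton_partition T) s /\ last (singleton_partition T) s = P
    & {in singleton_partition T :: s, forall Q : {set {set T}}, {in Q, forall B, #|B| <= m}}.
Proof.
have [n] := ubnP (#|T| - #|P|); elim: n P => // n IH P lt_n partP smallP.
have [B /andP[PB gt1B] | block1] := pickP [pred B in P | 1 < #|B|]; last first.
  have defP : P = singleton_partition T.
    by apply: partition_block1 => // B PB; have := block1 B; rewrite /= PB ltnNge => /negbFE.
  by exists [::]; rewrite -?defP // => Q; rewrite mem_seq1 => /eqP->.
have [x Bx] : exists x, x \in B by apply/card_gt0P; apply: ltnW.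
have neqBx : B != [set x] by apply: contraTneq gt1B => ->; rewrite cards1.
have [partP' stepP'P cardP'] := partition_split partP PB Bx neqBx.
set P' := _ |: _ in partP' stepP'P cardP'.
have smallP' : {in P', forall C : {set T}, #|C| <= m}.
  have le_mB := smallP B PB.
  move=> C /setU1P[->|/setU1P[->|/setD1P[_ /smallP//]]].
    by rewrite cards1 (leq_trans _ le_mB) // ltnW.
  exact: leq_trans (subset_leq_card (subD1set B x)) le_mB.
have lt_n' : #|T| - #|P'| < n.
  by move: (card_partition_le partP'); rewrite cardsT cardP'; lia.
have [s [chain_s last_s] small_s] := IH P' lt_n' partP' smallP'.
exists (rcons s P).
  by rewrite last_rcons; split=> //; apply: merge_chain_rcons; rewrite ?last_s.
by move=> Q; rewrite -rcons_cons mem_rcons => /predU1P[->|/small_s].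
Qed.

End ChainToPartition.

Lemma imsetD1 (aT rT : finType) (f : aT -> rT) (A : {set aT}) x :
  injective f -> f @: (A :\ x) = f @: A :\ f x.
Proof.
move=> inj_f; apply/setP => y; rewrite in_setD1; apply/imsetP/andP.
  by case=> z /[!in_setD1] /andP[neq_zx Az] ->; rewrite (inj_eq inj_f) neq_zx imset_f.
case=> neq_yfx /imsetP[z Az eq_yfz]; exists z => //.
by rewrite in_setD1 Az andbT; apply: contraNneq neq_yfx => eq_zx; rewrite eq_yfz eq_zx.
Qed.

Section LiftPartition.
Variables (T T' : finType) (e : rel T) (e' : rel T') (f : T -> T') (d : nat).
Hypothesis f_surj : forall y, exists x, f x = y.
Hypothesis f_edge : forall u v, e u v -> f u != f v -> e' (f u) (f v).
Hypothesis e'_sym : symmetric e'.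
Hypothesis deg_e' : forall y, degree e' y <= d.

Definition lift_partition (Q : {set {set T'}}) : {set {set T}} :=
  [set f @^-1: X | X : {set T'} in Q].

Lemma preimset_inj : injective (fun X : {set T'} => f @^-1: X).
Proof.
move=> X Y /setP eqXY; apply/setP => y; have [x <-] := f_surj y.
by have := eqXY x; rewrite !inE.
Qed.

Lemma lift_merge_step P Q :
  merge_step P Q -> merge_step (lift_partition P) (lift_partition Q).
Proof.
case=> U [W [PU PW neqUW ->]]; exists (f @^-1: U), (f @^-1: W).
split; rewrite ?imset_f ?(inj_eq preimset_inj) //.
by rewrite /lift_partition imsetU1 !imsetD1 ?preimsetU //; apply: preimset_inj.
Qed.

Lemma lift_merge_chain P s :
  merge_chain P s -> merge_chain (lift_partition P) (map lift_partition s).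
Proof. by elim: s P => [|R s IH] P //= [/lift_merge_step stepPR /IH]. Qed.

Lemma lift_trivIset Q : trivIset Q -> trivIset (lift_partition Q).
Proof.
move=> /trivIsetP tiQ; apply/trivIsetP => _ _ /imsetP[X QX ->] /imsetP[Y QY ->] neq.
have /tiQ : X != Y by apply: contraNneq neq => ->.
by rewrite -!setI_eq0 -preimsetI => /(_ QX QY) /eqP->; rewrite preimset0.
Qed.

Lemma lift_adjacent Q X Y : trivIset Q -> X \in Q -> Y \in Q -> X != Y ->
  [exists u in f @^-1: X, exists w in f @^-1: Y, e u w] ->
  [exists x in X, exists y in Y, e' x y].
Proof.
move=> /trivIsetP tiQ QX QY neqXY /exists_inP[u /[!inE] Xu /exists_inP[w /[!inE] Yw euw]].
have neq_fuw : f u != f w.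
  apply: contraTneq (tiQ X Y QX QY neqXY) => eq_fuw.
  by apply/pred0Pn; exists (f u); rewrite /= Xu eq_fuw.
by apply/exists_inP; exists (f u) => //; apply/exists_inP; exists (f w); rewrite ?f_edge.
Qed.

Lemma red_degree_lift Q X : trivIset Q -> X \in Q ->
  red_degree e (lift_partition Q) (f @^-1: X) <= maxn (red_degree e' Q X) (d * d).
Proof.
move=> tiQ QX.
have red_lift Y : Y \in Q -> f @^-1: Y != f @^-1: X ->
    red_edge e (f @^-1: X) (f @^-1: Y) -> (Y != X) && [exists x in X, exists y in Y, e' x y].
  move=> QY neqYX /andP[adjXY _]; have neq : Y != X by apply: contraNneq neqYX => ->.
  by rewrite neq (lift_adjacent tiQ QX QY) // eq_sym.
pose black Y := [&& Y \in Q, f @^-1: Y != f @^-1: X,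
                 red_edge e (f @^-1: X) (f @^-1: Y) & ~~ red_edge e' X Y].
have [Y /and4P[QY neqYX redXY blackXY] | no_black] := pickP black.
- have [/exists_inP[_ _ /exists_inP[y Yy _]] complete] :
      [exists x in X, exists y in Y, e' x y] /\ [forall x in X, forall y in Y, e' x y].
    have /andP[_ adjXY] := red_lift Y QY neqYX redXY.
    by move: blackXY; rewrite /red_edge adjXY negbK.
  have le_Xd : #|X| <= d.
    apply: leq_trans (deg_e' y); apply/subset_leq_card/subsetP => x Xx.
    by rewrite inE e'_sym; move/forall_inP: complete => /(_ x Xx) /forall_inP; apply.
  rewrite leq_max; apply/orP; right.
  apply: leq_trans (leq_mul (leqnn d) le_Xd).
  apply: leq_trans (card_nbhd deg_e' X).
  apply: leq_trans (card_blocks_meeting (nbhd e' X) tiQ).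
  apply: leq_trans (leq_imset_card (fun Z : {set T'} => f @^-1: Z) _).
  apply/subset_leq_card/subsetP => _ /[!inE] /andP[/imsetP[Z QZ ->] /andP[neqZX redXZ]].
  have /andP[_ adjXZ] := red_lift Z QZ neqZX redXZ.
  by rewrite imset_f // inE QZ nbhd_meets.
- rewrite leq_max; apply/orP; left.
  apply: leq_trans (leq_imset_card (fun Z : {set T'} => f @^-1: Z) _).
  apply/subset_leq_card/subsetP => _ /[!inE] /andP[/imsetP[Y QY ->] /andP[neqYX' redXY]].
  have /andP[neqYX _] := red_lift Y QY neqYX' redXY.
  have := no_black Y; rewrite /black QY neqYX' redXY /= => /negbFE redXY'.
  by rewrite imset_f // inE QY neqYX.
Qed.

Lemma max_red_degree_lift Q : trivIset Q ->
  max_red_degree e (lift_partition Q) <= maxn (max_red_degree e' Q) (d * d).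
Proof.
move=> tiQ; apply/bigmax_leqP => _ /imsetP[X QX ->].
apply: leq_trans (red_degree_lift tiQ QX) _.
by rewrite geq_max leq_maxr andbT (leq_trans _ (leq_maxl _ _)) // (bigmax_sup X).
Qed.

End LiftPartition.

Section TwinWidthQuotient.
Variables (T T' : finType) (e : rel T) (e' : rel T') (f : T -> T') (d : nat).
Hypothesis f_surj : forall y, exists x, f x = y.
Hypothesis f_edge : forall u v, e u v -> f u != f v -> e' (f u) (f v).
Hypothesis e'_sym : symmetric e'.
Hypothesis deg_e : forall v, degree e v <= d.
Hypothesis deg_e' : forall y, degree e' y <= d.
Hypothesis card_fibre : forall y, #|f @^-1: [set y]| <= d.

Lemma fibre_partition : partition (lift_partition f (singleton_partition T')) [set: T].
Proof.
apply/and3P; split.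
- apply/eqP/setP => x; rewrite inE; apply/bigcupP.
  by exists (f @^-1: [set f x]); rewrite ?inE // !imset_f.
- exact/lift_trivIset/trivIset_singleton_partition.
- apply/imsetP => -[_ /imsetP[y _ ->] /setP fibre0].
  by have [x fx] := f_surj y; have := fibre0 x; rewrite !inE fx eqxx.
Qed.

Theorem tww_ge_quotient k : d * d < k -> tww_ge e k -> tww_ge e' k.
Proof.
move=> lt_ddk tww_e [//|_ s'] [-> chain' last']; rewrite leqNgt; apply/negP => lt_w.
have small_fibres :
    {in lift_partition f (singleton_partition T'), forall B : {set T}, #|B| <= d}.
  by move=> _ /imsetP[_ /imsetP[y _ ->] ->].
have [s0 [chain0 last0] small0] := merge_chain_to_partition fibre_partition small_fibres.
pose S := singleton_partition T :: s0 ++ map (lift_partition f) s'.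
have csS : contraction_sequence S.
  split=> //; first by apply: merge_chain_cat; rewrite // last0; apply: lift_merge_chain.
  by rewrite last_cat last0 last_map (leq_trans (leq_imset_card _ _) last').
have := tww_e S csS; apply/negP; rewrite -ltnNge.
apply: (@leq_ltn_trans (maxn (cs_width e' (singleton_partition T' :: s')) (d * d)));
  last by rewrite gtn_max lt_w lt_ddk.
apply/bigmax_leqP_seq => P; rewrite /S -cat_cons mem_cat => /orP[s0P _ | /mapP[Q s'Q ->] _].
- have tiP := merge_chain_trivIset (trivIset_singleton_partition T) chain0 s0P.
  apply: leq_trans (leq_maxr _ _); apply/bigmax_leqP => B PB.
  exact: leq_trans (red_degree_le deg_e B tiP) (leq_mul (leqnn d) (small0 P s0P B PB)).
- have tiQ : trivIset Q.
    apply: (merge_chain_trivIset (trivIset_singleton_partition T') chain').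
    by rewrite inE s'Q orbT.
  apply: leq_trans (max_red_degree_lift f_edge e'_sym deg_e' tiQ) _.
  rewrite geq_max leq_maxr andbT (leq_trans _ (leq_maxl _ _)) //.
  by rewrite leq_bigmax_seq // inE s'Q orbT.
Qed.

End TwinWidthQuotient.

Section QuotientGraph.
Variables (T T' : finType) (e : rel T) (f : T -> T').

Definition quotient_rel : rel T' :=
  fun a b => (a != b) && [exists u, exists v, [&& f u == a, f v == b & e u v]].

Lemma quotient_rel_simple : symmetric e -> simple_graph quotient_rel.
Proof.
move=> e_sym; split=> [a b|a]; last by rewrite /quotient_rel eqxx.
rewrite /quotient_rel eq_sym; congr (_ && _).
by apply/existsP/existsP => -[u /existsP[v /and3P[fu fv euv]]];
  exists v; apply/existsP; exists u; rewrite fu fv e_sym.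
Qed.

Lemma quotient_rel_edge u v : e u v -> f u != f v -> quotient_rel (f u) (f v).
Proof.
move=> euv neq_fuv; rewrite /quotient_rel neq_fuv.
by apply/existsP; exists u; apply/existsP; exists v; rewrite !eqxx.
Qed.

Lemma degree_quotient_rel a (S : {set T'}) :
  (forall u v, f u = a -> e u v -> f v != a -> f v \in S) ->
  degree quotient_rel a <= #|S|.
Proof.
move=> nbhdS; apply/subset_leq_card/subsetP => b.
rewrite inE => /andP[neq_ab /existsP[u /existsP[v /and3P[/eqP fu /eqP fv euv]]]].
by rewrite -fv (nbhdS u) // fv eq_sym.
Qed.

End QuotientGraph.

Section Retraction.
Variables (T : finType) (phi : T -> T).
Hypothesis phiK : forall x, phi (phi x) = phi x.

Definition retract (v : T) : {x : T | phi x == x} := exist _ (phi v) (introT eqP (phiK v)).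

Lemma retract_surj a : exists x, retract x = a.
Proof. by exists (val a); apply: val_inj; apply/eqP; have := valP a. Qed.

Lemma preimset_retract a : retract @^-1: [set a] = [set u | phi u == val a].
Proof. by apply/setP => u; rewrite !inE -val_eqE. Qed.

Lemma card_retract_lt z : phi z != z -> #|{: {x : T | phi x == x}}| < #|T|.
Proof.
move=> phi_z; rewrite card_sig -cardsE -cardsT; apply: proper_card.
by rewrite properT; apply/eqP => /setP/(_ z); rewrite !inE (negbTE phi_z).
Qed.

Lemma degree_quotient_retract (e : rel T) a (S : {set T}) : phi a = a ->
  (forall u v, phi u = a -> e u v -> phi v != a -> phi v \in S) ->
  degree (quotient_rel e retract) (retract a) <= #|S|.
Proof.
move=> phi_a nbhdS; apply: leq_trans (leq_imset_card retract S).
apply: degree_quotient_rel => u v /(congr1 val) /=; rewrite phi_a => phi_u euv.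
rewrite -(inj_eq val_inj) /= phi_a => phi_v.
have -> : retract v = retract (phi v) by apply: val_inj; rewrite /= phiK.
by rewrite imset_f // (nbhdS u).
Qed.

End Retraction.

Definition subcubic_retraction (T : finType) (e : rel T) (phi : T -> T) : Prop :=
  [/\ forall x, phi (phi x) = phi x,
      forall a, #|[set u | phi u == a]| <= 3 &
      forall a, phi a = a -> exists2 S : {set T}, #|S| <= 3 &
        forall u v, phi u = a -> e u v -> phi v != a -> phi v \in S].

Lemma retraction_quotient k (T : finType) (e : rel T) (phi : T -> T) z :
  9 < k -> simple_graph e -> subcubic e -> tww_ge e k ->
  subcubic_retraction e phi -> phi z != z ->
  exists (T' : finType) (e' : rel T'),
    [/\ simple_graph e', subcubic e', tww_ge e' k & #|T'| < #|T|].
Proof.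
move=> lt9k [e_sym _] e_cubic tww_e [phiK card_fibre nbhd3] phi_z.
have e'_simple := quotient_rel_simple (retract phiK) e_sym.
have e'_cubic : subcubic (quotient_rel e (retract phiK)).
  move=> a; have phi_a : phi (val a) = val a by apply/eqP; apply: (valP a).
  have [S S3 nbhdS] := nbhd3 _ phi_a.
  have -> : a = retract phiK (val a) by apply: val_inj.
  exact: leq_trans (degree_quotient_retract phiK phi_a nbhdS) S3.
exists {x : T | phi x == x}, (quotient_rel e (retract phiK)); split=> //.
- apply: (tww_ge_quotient (d := 3)) tww_e => //.
  + exact: retract_surj.
  + exact: quotient_rel_edge.
  + by case: e'_simple.
  + by move=> a; rewrite preimset_retract.
- exact: card_retract_lt phi_z.
Qed.

Lemma card3 (T : finType) (p q r : T) : #|[set p; q; r]| <= 3.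
Proof. by rewrite -setUA cardsU1 cards2 -[3]/(1 + 2) leq_add ?leq_b1 // ltnS leq_b1. Qed.

Section FibreNeighbourhoods.
Variables (T : finType) (e : rel T).
Hypothesis e_cubic : subcubic e.

Lemma nbhd_but_two u b d : b != d -> e u b -> e u d ->
  exists p, forall v, e u v -> v \in [set b; d; p].
Proof.
move=> neq_bd eub eud; pose R := [set w | e u w] :\ b :\ d.
have R1 : #|R| <= 1.
  move: (e_cubic u); rewrite /degree (cardsD1 b) (cardsD1 d (_ :\ b)).
  by rewrite !inE eub eud eq_sym neq_bd.
exists (odflt b [pick w in R]) => v euv; rewrite !inE.
have [//|neq_vb] := eqVneq v b; have [//|neq_vd] := eqVneq v d.
have Rv : v \in R by rewrite !inE neq_vb neq_vd.
case: pickP => [p Rp | /(_ v)]; last by rewrite Rv.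
by move: Rv; rewrite (card_le1P R1 p Rp).
Qed.

Lemma fibre1_nbhd (phi : T -> T) a : (forall u, phi u = a -> u = a) ->
  exists2 S : {set T}, #|S| <= 3 &
    forall u v, phi u = a -> e u v -> phi v != a -> phi v \in S.
Proof.
move=> fibre_a; exists (phi @: [set w | e a w]).
  exact: leq_trans (leq_imset_card _ _) (e_cubic a).
by move=> u v /fibre_a -> eav _; rewrite imset_f ?inE.
Qed.

Lemma fibre2_nbhd (phi : T -> T) a a' c :
  (forall u, phi u = a -> u \in [set a; a']) ->
  (forall u, u \in [set a; a'] -> exists b d,
     [/\ b != d, e u b, e u d, phi b \in [set a; c] & phi d \in [set a; c]]) ->
  exists2 S : {set T}, #|S| <= 3 &
    forall u v, phi u = a -> e u v -> phi v != a -> phi v \in S.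
Proof.
move=> fibre_a two_nbrs.
have nbhd1 u : u \in [set a; a'] ->
    exists p, forall v, e u v -> phi v != a -> phi v \in [set c; phi p].
  case/two_nbrs => b [d [neq_bd eub eud phi_b phi_d]].
  have [p sub_p] := nbhd_but_two neq_bd eub eud.
  exists p => v /sub_p; rewrite !inE => /orP[/orP[]|] /eqP-> neq_a; rewrite ?eqxx ?orbT //.
    by move: phi_b; rewrite !inE (negbTE neq_a) => /= ->.
  by move: phi_d; rewrite !inE (negbTE neq_a) => /= ->.
have [p nbhd_a] := nbhd1 a (set21 a a').
have [p' nbhd_a'] := nbhd1 a' (set22 a a').
exists [set c; phi p; phi p']; first exact: card3.
move=> u v /fibre_a /set2P[]-> euv neq_a.
  by move: (nbhd_a v euv neq_a); rewrite !inE => /orP[]->; rewrite ?orbT.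
by move: (nbhd_a' v euv neq_a); rewrite !inE => /orP[]->; rewrite ?orbT.
Qed.

End FibreNeighbourhoods.

Section Fold.
Variables (T : finType) (x y z w : T).
Hypotheses (neq_xy : x != y) (neq_zx : z != x) (neq_zy : z != y).
Hypotheses (neq_wx : w != x) (neq_wz : w != z).

(* For a triangle x y z take w = y. *)
Definition fold_map (v : T) : T := if v == z then x else if v == w then y else v.

Lemma fold_map_id v : v != z -> v != w -> fold_map v = v.
Proof. by rewrite /fold_map => /negbTE-> /negbTE->. Qed.

Lemma fold_map_z : fold_map z = x.
Proof. by rewrite /fold_map eqxx. Qed.

Lemma fold_map_w : fold_map w = y.
Proof. by rewrite /fold_map (negbTE neq_wz) eqxx. Qed.

Lemma fold_map_x : fold_map x = x.
Proof. by rewrite fold_map_id // eq_sym. Qed.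

Lemma fold_map_y : fold_map y = y.
Proof. by rewrite /fold_map eq_sym (negbTE neq_zy); case: eqP. Qed.

Lemma fold_mapK v : fold_map (fold_map v) = fold_map v.
Proof.
have [->|neq_vz] := eqVneq v z; first by rewrite fold_map_z fold_map_x.
have [->|neq_vw] := eqVneq v w; first by rewrite fold_map_w fold_map_y.
by rewrite !fold_map_id.
Qed.

Lemma fold_map_fibre a u : fold_map u = a -> u \in [set a; z; w].
Proof.
move=> fold_u; rewrite !inE; have [->|neq_uz] := eqVneq u z; first by rewrite orbT.
have [->|neq_uw] := eqVneq u w; first by rewrite orbT.
by rewrite -fold_u fold_map_id ?eqxx.
Qed.

Lemma fold_map_fibre_x u : fold_map u = x -> u \in [set x; z].
Proof.
move=> fold_u; have := fold_map_fibre fold_u; rewrite !inE => /orP[//|/eqP u_w].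
by move: fold_u; rewrite u_w fold_map_w => /eqP; rewrite eq_sym (negbTE neq_xy).
Qed.

Lemma fold_map_fibre_y u : fold_map u = y -> u \in [set y; w].
Proof.
move=> fold_u; have := fold_map_fibre fold_u; rewrite !inE -orbA.
case/or3P=> [->//|/eqP u_z|->]; last by rewrite orbT.
by move: fold_u; rewrite u_z fold_map_z => /eqP; rewrite (negbTE neq_xy).
Qed.

Lemma fold_map_fibre_other a u : a != x -> a != y -> fold_map u = a -> u = a.
Proof.
move=> neq_ax neq_ay fold_u; have := fold_map_fibre fold_u; rewrite !inE -orbA.
case/or3P=> [/eqP//|/eqP u_z|/eqP u_w].
  by move: neq_ax; rewrite -fold_u u_z fold_map_z eqxx.
by move: neq_ay; rewrite -fold_u u_w fold_map_w eqxx.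
Qed.

Lemma fold_map_cycle u : u \in [set x; y; z; w] -> fold_map u \in [set x; y].
Proof.
rewrite !inE => /orP[/orP[/orP[]|]|] /eqP->;
  by rewrite ?fold_map_x ?fold_map_y ?fold_map_z ?fold_map_w eqxx ?orbT.
Qed.

End Fold.

Lemma fold_subcubic_retraction (T : finType) (e : rel T) (x y z w : T) :
  subcubic e -> x != y -> z != x -> z != y -> w != x -> w != z ->
  (forall u, u \in [set x; y; z; w] -> exists b d,
     [/\ b != d, e u b, e u d, b \in [set x; y; z; w] & d \in [set x; y; z; w]]) ->
  subcubic_retraction e (fold_map x y z w).
Proof.
move=> e_cubic neq_xy neq_zx neq_zy neq_wx neq_wz two_nbrs.
have nbrs_in u : u \in [set x; y; z; w] -> exists b d, [/\ b != d, e u b, e u d,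
    fold_map x y z w b \in [set x; y] & fold_map x y z w d \in [set x; y]].
  by move=> /two_nbrs[b [d [? ? ? Kb Kd]]]; exists b, d; rewrite !fold_map_cycle.
split.
- exact: fold_mapK.
- move=> a; apply: leq_trans (card3 a z w).
  by apply/subset_leq_card/subsetP => u; rewrite inE => /eqP /fold_map_fibre.
- move=> a _; have [-> | neq_ax] := eqVneq a x.
    apply: (fibre2_nbhd e_cubic (a' := z) (c := y)) => u; first exact: fold_map_fibre_x.
    by rewrite !inE => /orP[] /eqP->; apply: nbrs_in; rewrite !inE eqxx ?orbT.
  have [-> | neq_ay] := eqVneq a y.
    apply: (fibre2_nbhd e_cubic (a' := w) (c := x)) => u; first exact: fold_map_fibre_y.
    rewrite !inE [[set y; x]]setUC => /orP[] /eqP->;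
      by apply: nbrs_in; rewrite !inE eqxx ?orbT.
  by apply: (fibre1_nbhd e_cubic) => u; apply: fold_map_fibre_other.
Qed.

Lemma short_cycle_retraction (T : finType) (e : rel T) c :
  subcubic e -> symmetric e -> is_graph_cycle e c -> size c < 5 ->
  exists phi z, subcubic_retraction e phi /\ phi z != z.
Proof.
move=> e_cubic e_sym /and3P[uniq_c size_c cycle_c] short_c.
case: c uniq_c size_c cycle_c short_c => [|x [|y [|z [|w [|? ?]]]]] //= uniq_c _ cycle_c _.
- move: uniq_c; rewrite !inE !negb_or => /and3P[/andP[neq_xy neq_xz] neq_yz _].
  case/and4P: cycle_c => exy eyz ezx _.
  exists (fold_map x y z y), z; split; last by rewrite fold_map_z // eq_sym.
  apply: fold_subcubic_retraction; rewrite // 1?eq_sym //.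
  move=> u; rewrite !inE => /orP[/orP[/orP[]|]|] /eqP->;
    [exists y, z | exists x, z | exists x, y | exists x, z];
    by split; rewrite ?inE ?eqxx ?orbT // 1?eq_sym // e_sym.
- move: uniq_c; rewrite !inE !negb_or.
  move=> /and4P[/and3P[neq_xy neq_xz neq_xw] /andP[neq_yz neq_yw] neq_zw _].
  case/and5P: cycle_c => exy eyz ezw ewx _.
  exists (fold_map x y z w), z; split; last by rewrite fold_map_z // eq_sym.
  apply: fold_subcubic_retraction; rewrite // 1?eq_sym //.
  move=> u; rewrite !inE => /orP[/orP[/orP[]|]|] /eqP->;
    [exists y, w | exists x, z | exists y, w | exists x, z];
    by split; rewrite ?inE ?eqxx ?orbT // 1?eq_sym // e_sym.
Qed.

Theorem mainTheorem12 (k : nat) (T : finType) (e : rel T) :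
  9 < k ->
  simple_graph e -> subcubic e -> tww_ge e k ->
  (forall (T' : finType) (e' : rel T'),
      simple_graph e' -> subcubic e' -> tww_ge e' k -> #|T| <= #|T'|) ->
  girth_ge e 5.
Proof.
move=> lt9k e_simple e_cubic e_tww minimal c c_cycle; rewrite leqNgt; apply/negP => c_short.
have [phi [z [phi_retr phi_z]]] :=
  short_cycle_retraction e_cubic e_simple.1 c_cycle c_short.
have [T' [e' [e'_simple e'_cubic e'_tww lt_T'T]]] :=
  retraction_quotient lt9k e_simple e_cubic e_tww phi_retr phi_z.
by have := minimal T' e' e'_simple e'_cubic e'_tww; rewrite leqNgt lt_T'T.
Qed.
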